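(* Let $n\ge2$, let $\mathcal{C}_i^X$ denote the set of maximal flags of $\mathrm{PG}(n,q)$ of type $i$ with respect to the point $X$. Then for all $i,j\in[n+1]$ and points $X,Y$, $$|\mathcal{C}_i^X\cap\mathcal{C}_j^Y|=\begin{cases}\delta_{ij}\,c(n-1)\,q^{i-1}&\text{if }X=Y,\\ c(n-2)\,q^{i-2}(q^{j-1}-\delta_{ij})&\text{if }X\neq Y.\end{cases}$$
   Context: A maximal flag of $\mathrm{PG}(n,q)$ is $(U_1,\dots,U_n)$ with $U_1\subset\cdots\subset U_n$ subspaces of $\mathbb{F}_q^{n+1}$, $\dim U_i=i$. Its type with respect to a point $X$ is the smallest $k\in[n]$ with $X\subseteq U_k$, and $n+1$ otherwise. $v(k)=\frac{q^{k+1}-1}{q-1}$ is the number of points of $\mathrm{PG}(k,q)$ and $c(k)=\prod_{i=1}^k v(i)$ is the number of maximal flags of $\mathrm{PG}(k,q)$ (with $c(0)=1$). *)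

From HB Require Import structures.
From mathcomp Require Import all_boot all_order all_algebra all_field.
Set Implicit Arguments. Unset Strict Implicit. Unset Printing Implicit Defensive.
Import GRing.Theory.

(* Subspaces of F^(n+1) are represented canonically by square matrices A
   with <<A>>%MS = A (row space), so that equal subspaces are equal matrices. *)
Definition is_subspace (F : fieldType) (m : nat) (A : 'M[F]_m) : bool :=
  (<<A>>%MS == A).

Definition is_point (F : fieldType) (n : nat) (X : 'M[F]_(n.+1)) : bool :=
  is_subspace X && (\rank X == 1).

(* A maximal flag (U_1,...,U_n); U_(k+1) is f k for k : 'I_n. *)
Definition is_max_flag (F : fieldType) (n : nat)
  (f : {ffun 'I_n -> 'M[F]_(n.+1)}) : bool :=
  [forall k : 'I_n, is_subspace (f k) && (\rank (f k) == k.+1)] &&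
  [forall k : 'I_n, forall l : 'I_n, (k <= l)%N ==> (f k <= f l)%MS].

(* Type of f w.r.t. X: smallest k in [n] with X <= U_k, and n+1 otherwise. *)
Definition flag_type (F : fieldType) (n : nat) (X : 'M[F]_(n.+1))
  (f : {ffun 'I_n -> 'M[F]_(n.+1)}) : nat :=
  (find (fun k : 'I_n => (X <= f k)%MS) (enum 'I_n)).+1.

Definition vPG (q k : nat) : nat := (q ^ k.+1 - 1) %/ (q - 1).
Definition cPG (q k : nat) : nat := \prod_(1 <= i < k.+1) vPG q i.

From HB Require Import structures.
From mathcomp Require Import all_boot all_order all_algebra all_field.
From mathcomp Require Import zify ring.
Set Implicit Arguments. Unset Strict Implicit. Unset Printing Implicit Defensive.

(* A maximal flag is a chain 0 = U_0 < U_1 < ... < U_n of upper covers, and it has type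
   i with respect to X iff X <= U_k exactly when i <= k, a condition on each U_k alone.
   So flags of prescribed types are paths of upper covers, counted rank by rank once we
   know how many admissible covers a subspace of rank k has; this depends on k only.
   Counting vectors, a subspace S has v(m) upper covers inside a subspace of rank
   rank S + m + 1, and exactly one through a given point outside S.  For X <> Y and
   i < j we also keep Y outside U_k + X for k < i, so that U_i = U_(i-1) + X avoids Y;
   the covers of U_k forbidden at such a step are then those inside the plane
   U_k + X + Y.  The case i = j follows by summing over j, as the types with respect
   to Y partition the flags of type i with respect to X. *)

Lemma path_andr (T : Type) (e : rel T) (p : pred T) x s :
  path (fun y z => e y z && p z) x s = path e x s && all p s.
Proof. by elim: s x => //= y s IHs x; rewrite IHs andbACA. Qed.

Section FiniteCounting.
Variable T : finType.

Lemma card_path_cons (e : rel T) m x :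
  #|[set t : m.+1.-tuple T | path e x t]|
  = \sum_(y | e x y) #|[set t : m.-tuple T | path e y t]|.
Proof.
under eq_bigr do rewrite -sum1_card.
rewrite pair_big_dep -sum1_card.
rewrite (reindex (fun p : T * m.-tuple T => cons_tuple p.1 p.2)) /=.
  by apply: eq_bigl => -[y t]; rewrite !inE.
exists (fun t => (thead t, behead_tuple t)) => [[y t] _ | t _] /=.
  by congr pair; apply: val_inj.
by case/tupleP: t => y t; apply: val_inj.
Qed.

Lemma card_layered_paths (e : rel T) (L : nat -> pred T) (c : nat -> nat) (K : nat) :
  (forall k x y, L k x -> e x y -> L k.+1 y) ->
  (forall k x, k < K -> L k x -> c k = #|[set y | e x y]| * c k.+1) ->
  c K = 1 ->
  forall m k x, k + m = K -> L k x -> #|[set t : m.-tuple T | path e x t]| = c k.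
Proof.
move=> L_step c_step c_end; elim=> [|m IHm] k x; rewrite ?addn0 => defK Lx.
  have -> : [set t : 0.-tuple T | path e x t] = setT.
    by apply/setP => t; rewrite !inE (tuple0 t).
  by rewrite defK c_end cardsT card_tuple.
rewrite card_path_cons (c_step k x) //; last by rewrite -defK addnS ltnS leq_addr.
rewrite (eq_bigr (fun=> c k.+1)) ?sum_nat_const ?cardsE // => y exy.
by apply: IHm (L_step _ _ _ Lx exy); rewrite addSnnS.
Qed.

Lemma card_finfun_tuple n (p : pred (seq T)) :
  #|[set f : {ffun 'I_n -> T} | p (tuple_of_finfun f)]| = #|[set t : n.-tuple T | p t]|.
Proof.
rewrite -(card_imset _ (can_inj (@tuple_of_finfunK T n))); apply: eq_card => t.
rewrite inE; apply/imsetP/idP => [[f] | pt]; first by rewrite inE => pf ->.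
by exists (finfun_of_tuple t); rewrite ?inE finfun_of_tupleK.
Qed.

Lemma card_sum_fibers (A : {set T}) (g : T -> nat) lo hi :
  {in A, forall x, lo <= g x < hi} ->
  #|A| = \sum_(lo <= j < hi) #|[set x in A | g x == j]|.
Proof.
move=> gA; rewrite -sum1_card.
under [RHS]eq_bigr do rewrite -sum1_card big_mkcond /=.
rewrite exchange_big big_mkcond /=; apply: eq_bigr => x _.
under eq_bigr do rewrite !inE eq_sym.
case: ifP => Ax; last by rewrite big1.
rewrite -big_mkcond sum1_count count_uniq_mem ?iota_uniq // mem_iota.
by have := gA x Ax; lia.
Qed.

Lemma cards_andN (a b : pred T) :
  #|[set x | a x && ~~ b x]| = #|[set x | a x]| - #|[set x | a x && b x]|.
Proof.
rewrite -(cardsID [set x | b x] [set x | a x]).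
have -> : [set x | a x && b x] = [set x | a x] :&: [set x | b x].
  by apply/setP => x; rewrite !inE.
by rewrite addKn; apply: eq_card => x; rewrite !inE andbC.
Qed.

End FiniteCounting.

Section GaussianCounts.
Variable q : nat.
Hypothesis q_gt1 : 1 < q.

Lemma vPG_sum d : vPG q d = \sum_(e < d.+1) q ^ e.
Proof. by rewrite /vPG !subn1 predn_exp mulKn //; lia. Qed.

Lemma vPG_mul_pred d : vPG q d * q.-1 = q ^ d.+1 - 1.
Proof. by rewrite vPG_sum mulnC -predn_exp subn1. Qed.

Lemma vPG0 : vPG q 0 = 1.
Proof. by rewrite vPG_sum big_ord1. Qed.

Lemma vPG_addS d e : vPG q (d + e).+1 = vPG q d + q ^ d.+1 * vPG q e.
Proof.
rewrite !vPG_sum -addnS -addSn big_split_ord big_distrr /=.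
by congr (_ + _); apply: eq_bigr => i _; rewrite expnD.
Qed.

Lemma vPGS d : vPG q d.+1 = 1 + q * vPG q d.
Proof. by rewrite -[d]add0n vPG_addS vPG0. Qed.

Lemma vPG_mul_expB d k : vPG q d * (q ^ k.+1 - q ^ k) = q ^ (k + d).+1 - q ^ k.
Proof.
rewrite expnS -{2}[q ^ k]mul1n -mulnBl subn1 mulnA vPG_mul_pred.
by rewrite mulnBl mul1n -expnD addSn addnC.
Qed.

Lemma cPG0 : cPG q 0 = 1.
Proof. by rewrite /cPG big_geq. Qed.

Lemma cPG_rec d : cPG q d = cPG q d.-1 * vPG q d.
Proof. by case: d => [|d]; rewrite ?cPG0 ?vPG0 // /cPG big_nat_recr. Qed.

End GaussianCounts.

Section FlagCompletions.
Variables (q n : nat).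
Hypothesis q_gt1 : 1 < q.

(* For a partial flag U_1 < ... < U_k of PG(n, q) whose members satisfy the type
   condition (type i, resp. types i < j with respect to two points), [type_step i k]
   and [types_step i j k] count the admissible U_(k+1), and [type_completions i k] and
   [types_completions i j k] the admissible completions to a maximal flag. *)
Definition type_step i k :=
  if k.+1 < i then q * vPG q (n - k.+1) else if k.+1 == i then 1 else vPG q (n - k).

Definition type_completions i k :=
  if k < i then q ^ (i - 1 - k) * cPG q (n - k.+1) else cPG q (n - k).

Definition types_step i j k :=
  if k.+1 < i then q ^ 2 * vPG q (n - k.+2)
  else if k.+1 == i then 1 else type_step j k.

Definition types_completions i j k :=
  if k < i then q ^ ((i - 1 - k) * 2 + (j - 1 - i)) * cPG q (n - k.+2)
  else type_completions j k.

Lemma type_completionsS i k :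
  type_completions i k = type_step i k * type_completions i k.+1.
Proof.
rewrite /type_completions /type_step; case: (ltngtP k.+1 i) => [lt_ki | lt_ik | <-].
- rewrite (cPG_rec q_gt1 (n - k.+1)) -subnS.
  by rewrite (_ : i - 1 - k = (i - 1 - k.+1).+1) ?expnS; [ring | lia].
- by rewrite (cPG_rec q_gt1 (n - k)) -subnS mulnC.
- by rewrite subSS subn0 subnn.
Qed.

Lemma types_completionsS i j k : i < j ->
  types_completions i j k = types_step i j k * types_completions i j k.+1.
Proof.
move=> lt_ij; rewrite /types_completions /types_step.
case: (ltngtP k.+1 i) => [lt_ki | lt_ik | def_i].
- rewrite (cPG_rec q_gt1 (n - k.+2)) -subnS.
  by rewrite (_ : (i - 1 - k) * 2 = (i - 1 - k.+1) * 2 + 2) ?expnD; [ring | lia].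
- by rewrite type_completionsS.
- move: lt_ij; rewrite -def_i /type_completions => ->.
  by rewrite subSS subn0 subnn mul0n add0n mul1n.
Qed.

Lemma type_completions0 i : 0 < i -> type_completions i 0 = q ^ (i - 1) * cPG q (n - 1).
Proof. by rewrite /type_completions subn0 => ->. Qed.

Lemma types_completions0 i j : 0 < i < j ->
  types_completions i j 0 = q ^ (i + j - 3) * cPG q (n - 2).
Proof.
case/andP=> lt0i lt_ij; rewrite /types_completions lt0i subn0.
by rewrite (_ : _ + _ = i + j - 3) //; lia.
Qed.

Lemma type_completions_end i : i <= n.+1 -> type_completions i n = 1.
Proof.
rewrite /type_completions subnn cPG0; case: ltnP => // lt_ni le_in.
by rewrite (_ : i - 1 - n = 0) 1?(_ : n - n.+1 = 0) ?cPG0 //; lia.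
Qed.

Lemma types_completions_end i j : i < j <= n.+1 -> types_completions i j n = 1.
Proof.
case/andP=> lt_ij le_jn; rewrite /types_completions ltnNge (_ : i <= n).
  exact: type_completions_end.
exact: leq_trans lt_ij le_jn.
Qed.

End FlagCompletions.

Section UpperCovers.
Variables (F : finFieldType) (N : nat).
Local Notation M := 'M[F]_N.
Local Notation q := #|F|.
Let q_gt1 : 1 < q. Proof. exact: card_finNzRing_gt1. Qed.

Lemma card_submx_rV m (A : 'M[F]_(m, N)) :
  #|[set v : 'rV[F]_N | (v <= A)%MS]| = q ^ \rank A.
Proof.
have -> : [set v : 'rV_N | (v <= A)%MS] = [set (u *m row_base A)%R | u : 'rV_(\rank A)].
  apply/setP=> v; rewrite inE -(eq_row_base A); apply/idP/imsetP.
    by case/submxP => u ->; exists u.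
  by case=> u _ ->; rewrite submxMl.
by rewrite card_imset ?card_mx ?mul1n //; exact: row_free_inj (row_base_free A).
Qed.

Lemma card_submx_rV_diff (S A : M) : (S <= A)%MS ->
  #|[set v : 'rV[F]_N | (v <= A)%MS && ~~ (v <= S)%MS]| = q ^ \rank A - q ^ \rank S.
Proof.
move=> sSA; rewrite cards_andN card_submx_rV -(card_submx_rV S); congr (_ - _).
by apply: eq_card => v; rewrite !inE andb_idl // => /submx_trans; apply.
Qed.

Lemma rank_sub_submx m1 m2 (A : 'M[F]_(m1, N)) (B : 'M[F]_(m2, N)) :
  (A <= B)%MS -> \rank B <= \rank A -> (B <= A)%MS.
Proof. by move=> sAB rBA; rewrite -(mxrank_leqif_sup sAB).2 eqn_leq rBA mxrankS. Qed.

Lemma mxrank_adds_rank1 m1 m2 (A : 'M[F]_(m1, N)) (B : 'M[F]_(m2, N)) :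
  \rank B = 1 -> ~~ (B <= A)%MS -> \rank (A + B)%MS = (\rank A).+1.
Proof.
move=> rB nBA; rewrite -addn1 -rB -mxrank_sum_cap -[LHS]addn0; congr (_ + _).
apply/esym/eqP; rewrite -leqn0 -ltnS -rB rank_ltmx // ltmxE capmxSr sub_capmx.
by rewrite negb_and nBA.
Qed.

Lemma rank_rV_notsub (S : M) (v : 'rV[F]_N) : ~~ (v <= S)%MS -> \rank v = 1.
Proof. by rewrite rank_rV; case: eqP => // ->; rewrite sub0mx. Qed.

Definition upper_cover (S W : M) :=
  [&& is_subspace W, \rank W == (\rank S).+1 & (S <= W)%MS].

Lemma upper_cover_rank S W : upper_cover S W -> \rank W = (\rank S).+1.
Proof. by case/and3P => _ /eqP. Qed.

Lemma upper_cover_sub S W : upper_cover S W -> (S <= W)%MS.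
Proof. by case/and3P. Qed.

Section PointCovers.
Variables (m : nat) (X : 'M[F]_(m, N)).
Hypothesis rankX : \rank X = 1.

Lemma upper_cover_adds S : ~~ (X <= S)%MS -> upper_cover S <<(S + X)%MS>>%MS.
Proof.
move=> nXS; rewrite /upper_cover /is_subspace genmx_id eqxx mxrank_gen.
by rewrite mxrank_adds_rank1 // eqxx genmxE addsmxSl.
Qed.

Lemma upper_cover_eq_adds S W : upper_cover S W -> ~~ (X <= S)%MS -> (X <= W)%MS ->
  W = <<(S + X)%MS>>%MS.
Proof.
case/and3P => /eqP defW /eqP rW sSW nXS sXW; rewrite -defW; apply/genmxP.
have sSXW : (S + X <= W)%MS by rewrite addsmx_sub sSW.
by rewrite sSXW rank_sub_submx // rW mxrank_adds_rank1.
Qed.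

Lemma card_upper_covers_through S : ~~ (X <= S)%MS ->
  #|[set W | upper_cover S W && (X <= W)%MS]| = 1.
Proof.
move=> nXS; rewrite -(cards1 <<(S + X)%MS>>%MS); apply: eq_card => W; rewrite !inE.
apply/andP/eqP => [[SW XW] | ->]; first exact: upper_cover_eq_adds.
by rewrite upper_cover_adds // genmxE addsmxSr.
Qed.

End PointCovers.

Lemma upper_cover_sub_addsE m1 m2 (X : 'M[F]_(m1, N)) (Y : 'M[F]_(m2, N)) S W :
  upper_cover S W -> \rank X = 1 -> \rank Y = 1 ->
  ~~ (X <= S)%MS -> ~~ (Y <= S + X)%MS ->
  ((X <= W)%MS || (Y <= W + X)%MS) = (W <= S + X + Y)%MS.
Proof.
move=> SW rX rY nXS nYSX; have sSW := upper_cover_sub SW.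
have rT : \rank (S + X + Y)%MS = (\rank S).+2 by rewrite !mxrank_adds_rank1.
have rWX : \rank (W + X)%MS <= (\rank S).+2.
  by rewrite -(upper_cover_rank SW) -addn1 -rX -mxrank_sum_cap leq_addr.
apply/idP/idP => [/orP[XW | YWX] | WT].
- by rewrite (upper_cover_eq_adds rX SW nXS XW) genmxE addsmxSl.
- have sTWX : (S + X + Y <= W + X)%MS.
    by rewrite !addsmx_sub YWX addsmxSr (submx_trans sSW) ?addsmxSl.
  apply: submx_trans (addsmxSl W X) (rank_sub_submx sTWX _).
  by rewrite rT.
- case: (boolP (X <= W)%MS) => //= nXW.
  have sWXT : (W + X <= S + X + Y)%MS.
    by rewrite addsmx_sub WT (submx_trans (addsmxSr S X)) ?addsmxSl.
  apply: submx_trans (addsmxSr _ Y) (rank_sub_submx sWXT _).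
  by rewrite rT mxrank_adds_rank1 // (upper_cover_rank SW).
Qed.

Lemma card_upper_covers_sub_mul (S T : M) : (S <= T)%MS ->
  #|[set W | upper_cover S W && (W <= T)%MS]| * (q ^ (\rank S).+1 - q ^ \rank S)
  = q ^ \rank T - q ^ \rank S.
Proof.
(* Each vector of T outside S lies in exactly one cover of S below T. *)
move=> sST; rewrite -card_submx_rV_diff // -[RHS]sum1_card.
rewrite (partition_big (fun v : 'rV[F]_N => <<(S + v)%MS>>%MS)
           (fun W => upper_cover S W && (W <= T)%MS)); last first.
  move=> v; rewrite inE => /andP[vT nvS].
  by rewrite upper_cover_adds ?(rank_rV_notsub nvS) // genmxE addsmx_sub sST.
rewrite -sum_nat_const; apply: eq_big => [W | W]; rewrite inE // => /andP[SW WT].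
rewrite -(upper_cover_rank SW) -card_submx_rV_diff ?(upper_cover_sub SW) // -sum1_card.
apply: eq_bigl => v; rewrite !inE.
apply/idP/idP => [/andP[vW nvS] | /andP[/andP[vT nvS] /eqP <-]].
  rewrite (submx_trans vW WT) nvS.
  by rewrite -(upper_cover_eq_adds (rank_rV_notsub nvS) SW nvS vW) eqxx.
by rewrite genmxE addsmxSr.
Qed.

Lemma card_upper_covers_sub (S T : M) : (S <= T)%MS -> \rank S < \rank T ->
  #|[set W | upper_cover S W && (W <= T)%MS]| = vPG q (\rank T - (\rank S).+1).
Proof.
move=> sST rST; apply/eqP.
rewrite -(eqn_pmul2r (_ : 0 < q ^ (\rank S).+1 - q ^ \rank S)) ?subn_gt0 ?ltn_exp2l //.
by rewrite card_upper_covers_sub_mul // vPG_mul_expB // -addnS subnSK // subnKC 1?ltnW.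
Qed.

Lemma card_upper_covers (S : M) : \rank S < N ->
  #|[set W | upper_cover S W]| = vPG q (N - (\rank S).+1).
Proof.
move=> rSN; rewrite -[X in vPG _ (X - _)](mxrank1 F N) -card_upper_covers_sub ?submx1 ?mxrank1 //.
by apply: eq_card => W; rewrite !inE submx1 andbT.
Qed.

Lemma card_upper_covers_avoid m (X : 'M[F]_(m, N)) (S : M) :
  \rank X = 1 -> ~~ (X <= S)%MS -> (\rank S).+1 < N ->
  #|[set W | upper_cover S W && ~~ (X <= W)%MS]| = q * vPG q (N - (\rank S).+2).
Proof.
move=> rX nXS rSN; rewrite cards_andN card_upper_covers_through // card_upper_covers 1?ltnW //.
rewrite (_ : N - (\rank S).+1 = (0 + (N - (\rank S).+2)).+1); last by lia.
by rewrite vPG_addS // vPG0 // addKn.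
Qed.

Lemma card_upper_covers_notsub (S T : M) :
  (S <= T)%MS -> \rank T = (\rank S).+2 -> (\rank S).+2 < N ->
  #|[set W | upper_cover S W && ~~ (W <= T)%MS]| = q ^ 2 * vPG q (N - (\rank S).+3).
Proof.
move=> sST rT rSN; rewrite cards_andN card_upper_covers_sub ?rT //.
rewrite card_upper_covers; last by lia.
rewrite (_ : N - (\rank S).+1 = (1 + (N - (\rank S).+3)).+1); last by lia.
by rewrite vPG_addS // subSn // subnn addKn.
Qed.

End UpperCovers.

Arguments upper_cover {F N} S W.

Section Flags.
Variables (F : finFieldType) (n : nat).
Local Notation M := 'M[F]_n.+1.
Implicit Types (f : {ffun 'I_n -> M}) (X S W : M).

Lemma nth_tuple_of_finfun f k (lt_kn : k < n) :
  nth 0%R (tuple_of_finfun f) k = f (Ordinal lt_kn).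
Proof. by rewrite -[k]/(nat_of_ord (Ordinal lt_kn)) -tnth_nth tnth_map tnth_ord_tuple. Qed.

Lemma is_max_flagE f : is_max_flag f = path upper_cover 0%R (tuple_of_finfun f).
Proof.
have nth_f := nth_tuple_of_finfun f.
have nth_f1 k (lt_kn : k < n) :
  nth 0%R (0%R :: tuple_of_finfun f) k.+1 = f (Ordinal lt_kn) := nth_f k lt_kn.
apply/andP/idP => [[/forallP rk_f /forallP mon_f] | path_f].
  apply/(pathP 0%R) => k; rewrite size_tuple => lt_kn; rewrite nth_f.
  have /andP[sub_fk /eqP rk_fk] := rk_f (Ordinal lt_kn).
  rewrite /upper_cover sub_fk rk_fk /=.
  case: k lt_kn {sub_fk rk_fk} => [|k] lt_kn; first by rewrite /= mxrank0 sub0mx.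
  have /andP[_ /eqP rk_fk] := rk_f (Ordinal (ltnW lt_kn)).
  rewrite (nth_f1 k (ltnW lt_kn)) rk_fk eqxx.
  by have /forallP/(_ (Ordinal lt_kn))/implyP := mon_f (Ordinal (ltnW lt_kn)); apply.
have step k (lt_kn : k < n) :
    upper_cover (nth 0%R (0%R :: tuple_of_finfun f) k) (f (Ordinal lt_kn)).
  by rewrite -nth_f; apply: (pathP 0%R path_f); rewrite size_tuple.
have rk_f k (lt_kn : k < n) : \rank (f (Ordinal lt_kn)) = k.+1.
  elim: k lt_kn => [|k IHk] lt_kn; rewrite (upper_cover_rank (step _ lt_kn)).
    by rewrite /= mxrank0.
  by rewrite (nth_f1 k (ltnW lt_kn)) IHk.
split; apply/forallP => [[k lt_kn]].
  by case/and3P: (step k lt_kn) => -> _ _; rewrite rk_f /=.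
apply/forallP => -[l lt_ln]; apply/implyP => /= le_kl.
have sorted_f : sorted (fun A B : M => A <= B)%MS (tuple_of_finfun f).
  by apply: sub_sorted (path_sorted path_f) => A B /upper_cover_sub.
rewrite -(nth_f k lt_kn) -(nth_f l lt_ln).
have submx_tr : transitive (fun A B : M => A <= B)%MS.
  by move=> B A C; apply: submx_trans.
by apply: (sorted_leq_nth submx_tr (@submx_refl _ _ _) _ sorted_f); rewrite ?inE ?size_tuple.
Qed.

Lemma max_flag_rank f : is_max_flag f -> forall k, \rank (f k) = k.+1.
Proof. by case/andP => /forallP rk_f _ k; case/andP: (rk_f k) => _ /eqP. Qed.

Lemma max_flag_mono f : is_max_flag f -> {homo f : k l / k <= l >-> (k <= l)%MS}.
Proof. by case/andP => _ /forallP mon_f k l; move/forallP/(_ l)/implyP: (mon_f k). Qed.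

Lemma flag_type_bounds X f : 0 < flag_type X f <= n.+1.
Proof. by rewrite ltn0Sn ltnS -[n in _ <= n]size_enum_ord find_size. Qed.

Lemma sub_flag_typeE X f k : is_max_flag f -> (X <= f k)%MS = (flag_type X f <= k.+1).
Proof.
move=> flag_f; rewrite /flag_type ltnS.
case: leqP => [le_pk | lt_kp]; last first.
  by have := before_find k lt_kp; rewrite nth_ord_enum /= => ->.
have lt_pn := leq_ltn_trans le_pk (ltn_ord k).
have has_X : has (fun l => X <= f l)%MS (enum 'I_n) by rewrite has_find size_enum_ord.
move/submx_trans: (nth_find k has_X); apply; apply: max_flag_mono => //.
by rewrite nth_enum_ord.
Qed.

Definition respects_type X i W := (X <= W)%MS == (i <= \rank W).

Lemma flag_type_eqE X f i : is_max_flag f -> 0 < i <= n.+1 ->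
  (flag_type X f == i) = all (respects_type X i) (tuple_of_finfun f).
Proof.
move=> flag_f lt0i; apply/eqP/all_tnthP => [<- k | resp_f].
  by rewrite /respects_type tnth_map tnth_ord_tuple sub_flag_typeE ?max_flag_rank.
have {}resp_f k : k < n -> (flag_type X f <= k.+1) = (i <= k.+1).
  move=> lt_kn; have /eqP := resp_f (Ordinal lt_kn).
  by rewrite tnth_map tnth_ord_tuple sub_flag_typeE ?max_flag_rank.
have := flag_type_bounds X f; move: (flag_type X f) resp_f => t resp_f bounds.
case: (ltngtP t i) => // [lt_ti | lt_it].
  by have := resp_f t.-1; rewrite prednK ?leqnn; lia.
by have := resp_f i.-1; rewrite prednK ?leqnn; lia.
Qed.

Lemma max_flag_type_path X i : 0 < i <= n.+1 ->
  [set f | is_max_flag f && (flag_type X f == i)]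
  = [set f | path (fun S W => upper_cover S W && respects_type X i W) 0%R (tuple_of_finfun f)].
Proof.
move=> lt0i; apply/setP => f; rewrite !inE path_andr -is_max_flagE.
by case: (boolP (is_max_flag f)) => // flag_f; rewrite flag_type_eqE.
Qed.

Lemma card_upper_cover_paths (P : pred M) (c : nat -> nat) :
  P 0%R -> (forall S, \rank S < n -> P S ->
    c (\rank S) = #|[set W | upper_cover S W && P W]| * c (\rank S).+1) ->
  c n = 1 ->
  #|[set f : {ffun 'I_n -> M} | path (fun S W => upper_cover S W && P W) 0%R
                                    (tuple_of_finfun f)]| = c 0.
Proof.
move=> P0 c_step c_end; rewrite card_finfun_tuple.
apply: (@card_layered_paths _ _ (fun k S => (\rank S == k) && P S) c n) => //.
- move=> k S W /andP[/eqP rS _] /andP[SW PW].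
  by rewrite (upper_cover_rank SW) rS eqxx.
- by move=> k S lt_kn /andP[/eqP rS PS]; subst k; apply: c_step.
- by rewrite mxrank0 eqxx.
Qed.

End Flags.

Section FlagCounts.
Variables (F : finFieldType) (n : nat).
Local Notation M := 'M[F]_n.+1.
Local Notation q := #|F|.
Let q_gt1 : 1 < q. Proof. exact: card_finNzRing_gt1. Qed.
Implicit Types (X S W : M).

Lemma point_rank X : is_point X -> \rank X = 1.
Proof. by case/andP=> _ /eqP. Qed.

Lemma point_notsub0 X : is_point X -> ~~ (X <= (0 : M)%R)%MS.
Proof. by move/point_rank => rX; rewrite submx0 -mxrank_eq0 rX. Qed.

Lemma point_subE X Y : is_point X -> is_point Y -> (Y <= X)%MS = (X == Y).
Proof.
case/andP=> /eqP defX /eqP rX /andP[/eqP defY /eqP rY].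
apply/idP/eqP => [YX | ->]; last exact: submx_refl.
by rewrite -defX -defY; apply/genmxP; rewrite YX rank_sub_submx // rX rY.
Qed.

Lemma respects_type0 X i : is_point X -> respects_type X i 0%R = (0 < i).
Proof.
move/point_notsub0 => nX0.
by rewrite /respects_type mxrank0 leqn0 (negbTE nX0) eq_sym eqbF_neg lt0n.
Qed.

Lemma respects_type_upper_cover X i S W : upper_cover S W ->
  respects_type X i S -> i <= \rank S -> respects_type X i W.
Proof.
move=> SW /eqP XS le_iS; rewrite /respects_type (upper_cover_rank SW) leqW //.
by rewrite (submx_trans _ (upper_cover_sub SW)) // XS.
Qed.

Lemma respects_type_notsub X i S : respects_type X i S -> \rank S < i -> ~~ (X <= S)%MS.
Proof. by move=> /eqP-> lt_Si; rewrite -ltnNge. Qed.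

Lemma card_upper_covers_type X i S : is_point X -> respects_type X i S -> \rank S < n ->
  #|[set W | upper_cover S W && respects_type X i W]| = type_step q n i (\rank S).
Proof.
move=> pX XS lt_Sn; have rX := point_rank pX.
rewrite /type_step; case: ltngtP => [lt_Si | lt_iS | def_i].
- rewrite -subSS -(card_upper_covers_avoid rX (respects_type_notsub XS (ltnW lt_Si))) //.
  apply: eq_card => W; rewrite !inE /respects_type; case: (boolP (upper_cover S W)) => //= SW.
  by rewrite (upper_cover_rank SW) (leqNgt i) lt_Si eqbF_neg.
- rewrite -subSS -card_upper_covers 1?ltnS 1?ltnW //; apply: eq_card => W; rewrite !inE.
  by case: (boolP (upper_cover S W)) => //= SW; rewrite (respects_type_upper_cover SW).
- rewrite -(card_upper_covers_through rX (respects_type_notsub XS _)) -?def_i //.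
  apply: eq_card => W; rewrite !inE /respects_type; case: (boolP (upper_cover S W)) => //= SW.
  by rewrite (upper_cover_rank SW) leqnn eqb_id.
Qed.

Lemma card_flags_type X i : is_point X -> 0 < i <= n.+1 ->
  #|[set f : {ffun 'I_n -> M} | is_max_flag f && (flag_type X f == i)]|
  = q ^ (i - 1) * cPG q (n - 1).
Proof.
move=> pX i_bounds; have /andP[lt0i le_in] := i_bounds.
rewrite max_flag_type_path // -type_completions0 //.
apply: card_upper_cover_paths => [|S lt_Sn XS|]; first by rewrite respects_type0.
  by rewrite card_upper_covers_type // type_completionsS.
exact: type_completions_end.
Qed.

(* The last condition keeps Y out of U_i = U_(i-1) + X. *)
Definition respects_types X Y i j W :=
  [&& respects_type X i W, respects_type Y j W & (\rank W < i) ==> ~~ (Y <= W + X)%MS].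

Lemma max_flag_types_path X Y i j : 0 < i -> i < j -> j <= n.+1 ->
  [set f : {ffun 'I_n -> M} | [&& is_max_flag f, flag_type X f == i & flag_type Y f == j]]
  = [set f | path (fun S W => upper_cover S W && respects_types X Y i j W) 0%R
                  (tuple_of_finfun f)].
Proof.
move=> lt0i lt_ij le_jn; apply/setP => f; rewrite !inE path_andr -is_max_flagE.
case: (boolP (is_max_flag f)) => //= flag_f.
have i_bounds : 0 < i <= n.+1 by lia.
have j_bounds : 0 < j <= n.+1 by lia.
rewrite (flag_type_eqE X flag_f i_bounds) (flag_type_eqE Y flag_f j_bounds).
have tnth_f k : tnth (tuple_of_finfun f) k = f k by rewrite tnth_map tnth_ord_tuple.
have all_f := all_tnthP (t := tuple_of_finfun f).
apply/andP/all_f => [[/all_f respX /all_f respY] k | resp]; last first.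
  by split; apply/all_f => k; case/and3P: (resp k).
rewrite /respects_types respX respY tnth_f max_flag_rank //=; apply/implyP => lt_ki.
have lt_in : i.-1 < n by lia.
have /eqP := respX (Ordinal lt_in); have /eqP := respY (Ordinal lt_in).
rewrite !tnth_f !max_flag_rank //= prednK // leqnn leqNgt lt_ij => nYf Xf.
apply: contraFN nYf => YfX; apply: submx_trans YfX _.
by rewrite addsmx_sub Xf andbT (max_flag_mono flag_f) //= -ltnS prednK // (ltnW lt_ki).
Qed.

Lemma card_upper_covers_types X Y i j S : is_point X -> is_point Y ->
  i < j -> j <= n.+1 -> respects_types X Y i j S -> \rank S < n ->
  #|[set W | upper_cover S W && respects_types X Y i j W]| = types_step q n i j (\rank S).
Proof.
move=> pX pY lt_ij le_jn /and3P[XS YS sepS] lt_Sn.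
have [rX rY] := (point_rank pX, point_rank pY).
rewrite /types_step; case: (ltngtP (\rank S).+1 i) => [lt_Si | lt_iS | def_i].
- have nXS := respects_type_notsub XS (ltnW lt_Si).
  have nYSX : ~~ (Y <= S + X)%MS := implyP sepS (ltnW lt_Si).
  have sST : (S <= S + X + Y)%MS by rewrite -addsmxA addsmxSl.
  rewrite -subSS -(card_upper_covers_notsub sST) ?mxrank_adds_rank1 //; last by lia.
  apply: eq_card => W; rewrite !inE; case: (boolP (upper_cover S W)) => //= SW.
  rewrite -(upper_cover_sub_addsE SW) // /respects_types /respects_type.
  rewrite (upper_cover_rank SW) lt_Si (leqNgt i) (leqNgt j) lt_Si (ltn_trans lt_Si lt_ij).
  rewrite /= !eqbF_neg.
  case: (boolP (Y <= W)%MS) => [YW | _]; last by rewrite negb_or.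
  by rewrite (submx_trans YW (addsmxSl W X)) orbT andbF.
- rewrite -(card_upper_covers_type pY YS) //; apply: eq_card => W; rewrite !inE.
  case: (boolP (upper_cover S W)) => //= SW.
  rewrite /respects_types (respects_type_upper_cover SW) // (upper_cover_rank SW).
  by rewrite ltnNge (ltnW lt_iS) andbT.
- have nXS := respects_type_notsub XS (eq_leq def_i).
  rewrite -(card_upper_covers_through rX nXS); apply: eq_card => W; rewrite !inE.
  case: (boolP (upper_cover S W)) => //= SW.
  rewrite /respects_types /respects_type (upper_cover_rank SW) def_i ltnn leqnn.
  rewrite leqNgt lt_ij eqb_id eqbF_neg andbT; apply: andb_idr => XW.
  by rewrite (upper_cover_eq_adds rX SW nXS XW) genmxE (implyP sepS) // -def_i.
Qed.

Lemma card_flags_types X Y i j : is_point X -> is_point Y -> X != Y ->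
  0 < i -> i < j -> j <= n.+1 ->
  #|[set f : {ffun 'I_n -> M} | [&& is_max_flag f, flag_type X f == i & flag_type Y f == j]]|
  = q ^ (i + j - 3) * cPG q (n - 2).
Proof.
move=> pX pY neqXY lt0i lt_ij le_jn.
rewrite max_flag_types_path // -types_completions0 ?lt0i //.
apply: card_upper_cover_paths => [|S lt_Sn sepS|]; last by rewrite types_completions_end ?lt_ij.
  rewrite /respects_types !respects_type0 // mxrank0 lt0i (ltn_trans lt0i lt_ij).
  by rewrite adds0mx_id point_subE.
by rewrite card_upper_covers_types // types_completionsS.
Qed.

Lemma card_flags_same_point X i j : is_point X -> 0 < i <= n.+1 ->
  #|[set f : {ffun 'I_n -> M} | [&& is_max_flag f, flag_type X f == i & flag_type X f == j]]|
  = (i == j) * (q ^ (i - 1) * cPG q (n - 1)).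
Proof.
move=> pX i_bounds; case: eqP => [<- | neq_ij].
  rewrite mul1n -(card_flags_type pX) //; apply: eq_card => f; rewrite !inE.
  by case: (flag_type X f == i); rewrite ?andbF ?andbT.
apply/eqP; rewrite mul0n cards_eq0; apply/eqP/setP => f; rewrite !inE.
by apply/and3P => -[_ /eqP-> /eqP].
Qed.

Lemma card_flags_types_neq X Y i j : is_point X -> is_point Y -> X != Y ->
  0 < i <= n.+1 -> 0 < j <= n.+1 -> i != j ->
  q * #|[set f : {ffun 'I_n -> M} |
          [&& is_max_flag f, flag_type X f == i & flag_type Y f == j]]|
  = q ^ (i - 1) * cPG q (n - 2) * q ^ (j - 1).
Proof.
move=> pX pY neqXY /andP[lt0i le_in] /andP[lt0j le_jn] neq_ij.
rewrite (_ : #|_| = q ^ (i + j - 3) * cPG q (n - 2)).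
  by rewrite mulnA -expnS mulnAC -expnD; congr (_ ^ _ * _); lia.
case: ltngtP neq_ij => // [lt_ij | lt_ji] _; first exact: card_flags_types.
have neqYX : Y != X by rewrite eq_sym.
rewrite addnC -(card_flags_types pY pX neqYX) //; apply: eq_card => f.
by rewrite !inE (andbC (flag_type X f == i)).
Qed.

Lemma card_flags_types_diag X Y i : is_point X -> is_point Y -> X != Y -> 0 < n ->
  0 < i <= n.+1 ->
  q * #|[set f : {ffun 'I_n -> M} | [&& is_max_flag f, flag_type X f == i & flag_type Y f == i]]|
  = q ^ (i - 1) * cPG q (n - 2) * (q ^ (i - 1) - 1).
Proof.
move=> pX pY neqXY lt0n i_bounds.
set cnt := fun j => #|[set f : {ffun 'I_n -> M} |
  [&& is_max_flag f, flag_type X f == i & flag_type Y f == j]]|.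
have i_in : i \in index_iota 1 n.+2 by rewrite mem_index_iota.
have sum_cnt : q ^ (i - 1) * cPG q (n - 1) = \sum_(1 <= j < n.+2) cnt j.
  rewrite -(card_flags_type pX) // (card_sum_fibers (g := flag_type Y) (lo := 1) (hi := n.+2)).
    by apply: eq_bigr => j _; apply: eq_card => f; rewrite !inE andbA.
  by move=> f _; apply: flag_type_bounds.
have sum_pow : vPG q n = \sum_(1 <= j < n.+2) q ^ (j - 1).
  by rewrite vPG_sum // big_add1 big_mkord; apply: eq_bigr => j _; rewrite subn1.
have cnt_neq j : j \in index_iota 1 n.+2 -> j != i ->
    q * cnt j = q ^ (i - 1) * cPG q (n - 2) * q ^ (j - 1).
  by rewrite mem_index_iota eq_sym => j_bounds neq_ij; apply: card_flags_types_neq.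
set rest := \sum_(j <- index_iota 1 n.+2 | j != i) q ^ (i - 1) * cPG q (n - 2) * q ^ (j - 1).
have sum_cnt_rest : q * (q ^ (i - 1) * cPG q (n - 1)) = q * cnt i + rest.
  rewrite sum_cnt big_distrr (bigD1_seq i) ?iota_uniq //=; congr (_ + _).
  by rewrite big_seq_cond [RHS]big_seq_cond; apply: eq_bigr => j /andP[]; apply: cnt_neq.
have sum_pow_rest : q ^ (i - 1) * cPG q (n - 2) * vPG q n
    = q ^ (i - 1) * cPG q (n - 2) * q ^ (i - 1) + rest.
  by rewrite sum_pow big_distrr (bigD1_seq i) ?iota_uniq.
move: sum_cnt_rest sum_pow_rest; rewrite (cPG_rec _ (n - 1)) // -subnS.
rewrite (_ : vPG q n = 1 + q * vPG q (n - 1)); last by rewrite -vPGS // subn1 prednK.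
rewrite -/(cnt i) mulnBr muln1; nia.
Qed.

Lemma card_flags_distinct_points X Y i j : is_point X -> is_point Y -> X != Y -> 0 < n ->
  0 < i <= n.+1 -> 0 < j <= n.+1 ->
  q * #|[set f : {ffun 'I_n -> M} | [&& is_max_flag f, flag_type X f == i & flag_type Y f == j]]|
  = q ^ (i - 1) * cPG q (n - 2) * (q ^ (j - 1) - (i == j)).
Proof.
move=> pX pY neqXY lt0n i_bounds j_bounds; case: eqP => [<- | /eqP neq_ij].
  exact: card_flags_types_diag.
by rewrite card_flags_types_neq // subn0.
Qed.

End FlagCounts.

Import GRing.Theory Num.Theory.
Local Open Scope ring_scope.

Theorem mainTheorem5 (F : finFieldType) (n : nat) (hn : (2 <= n)%N)
  (i j : nat) (hi : (1 <= i <= n.+1)%N) (hj : (1 <= j <= n.+1)%N)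
  (X Y : 'M[F]_(n.+1)) (hX : is_point X) (hY : is_point Y) :
  let q := #|F|%N in
  (#|[set f : {ffun 'I_n -> 'M[F]_(n.+1)} |
       [&& is_max_flag f, flag_type X f == i & flag_type Y f == j]]|)%:R
  = (if X == Y then
       (i == j)%:R * (cPG q (n - 1))%:R * (q%:R : rat) ^+ (i - 1)
     else
       (cPG q (n - 2))%:R * (q%:R : rat) ^ (i%:Z - 2)
         * ((q%:R : rat) ^+ (j - 1) - (i == j)%:R)).
Proof.
move=> q; rewrite {}/q; case: eqVneq => [<- | neqXY].
  by rewrite card_flags_same_point // !natrM natrX; ring.
have q_gt0 : (0 < #|F|)%N by apply: ltn_trans (card_finNzRing_gt1 F).
have Q_neq0 : (#|F|%:R : rat) != 0 by rewrite pnatr_eq0 -lt0n.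
apply: (mulfI Q_neq0); rewrite -natrM card_flags_distinct_points //; last by lia.
have Q_exp : (#|F|%:R : rat) * #|F|%:R ^ (i%:Z - 2) = #|F|%:R ^+ (i - 1).
  by rewrite -[X in X * _]expr1z -expfzDr // (_ : 1 + _ = (i - 1)%N :> int) //; lia.
rewrite !natrM natrB ?natrX; last by case: (i == j); rewrite ?expn_gt0 ?q_gt0.
rewrite -Q_exp; ring.
Qed.
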